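(* Let $k\ge 3$, let $\mathbf{v}^i,\mathbf{w}^i\in\mathbb{C}^{n_i}$ ($i=1,\dots,k$) with $\mathbf{v}^i,\mathbf{w}^i$ linearly independent for every $i$, $V_i=\langle\mathbf{v}^i,\mathbf{w}^i\rangle$, and $T=\sum_{i=1}^k \mathbf{v}^1\otimes\cdots\otimes\mathbf{w}^i\otimes\cdots\otimes\mathbf{v}^k$ (with $\mathbf{w}^i$ in the $i$-th slot). Let $P=\mathbf{p}^1\otimes\cdots\otimes\mathbf{p}^k$ with $\mathbf{p}^i\in V_i$ nonzero and $\mathbf{p}^i$ not a scalar multiple of $\mathbf{v}^i$ for every $i=1,\dots,k$. Then there is $\lambda\in\mathbb{C}$ with $\mathrm{rk}(T-\lambda P)=\mathrm{rk}(T)-1$, i.e. $P$ belongs to the decomposition locus of $T$.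
   Context: The rank of a tensor is the minimal number of rank-one tensors $\mathbf{u}^1\otimes\cdots\otimes\mathbf{u}^k$ summing to it. A rank-one tensor $P$ is in the decomposition locus of $T$ if $\mathrm{rk}(T-\lambda P)=\mathrm{rk}(T)-1$ for some $\lambda\in\mathbb{C}$. *)

From HB Require Import structures.
From mathcomp Require Import all_boot all_algebra.
From mathcomp Require Import complex.
From mathcomp Require Import reals Rstruct.
Set Implicit Arguments. Unset Strict Implicit. Unset Printing Implicit Defensive.
Import GRing.Theory Num.Theory.
Local Open Scope ring_scope.

Definition C : numClosedFieldType := (Rdefinitions.R)[i].

Definition multi_index (k : nat) (n : 'I_k -> nat) := forall i : 'I_k, 'I_(n i).
Definition tensor (k : nat) (n : 'I_k -> nat) := multi_index n -> C.

Definition outer (k : nat) (n : 'I_k -> nat) (u : forall i : 'I_k, 'rV[C]_(n i))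
  : tensor n := fun x => \prod_(i < k) u i 0 (x i).

Definition tensor_sub (k : nat) (n : 'I_k -> nat) (T P : tensor n) : tensor n :=
  fun x => T x - P x.
Definition tensor_scale (k : nat) (n : 'I_k -> nat) (c : C) (P : tensor n) : tensor n :=
  fun x => c * P x.

Definition sum_of_rank_one (k : nat) (n : 'I_k -> nat) (T : tensor n) (r : nat) :=
  exists u : 'I_r -> forall i : 'I_k, 'rV[C]_(n i),
    T = (fun x => \sum_(j < r) outer (u j) x).

Definition tensor_rank_is (k : nat) (n : 'I_k -> nat) (T : tensor n) (r : nat) :=
  sum_of_rank_one T r /\ forall r', sum_of_rank_one T r' -> (r <= r')%N.

Definition in_decomposition_locus (k : nat) (n : 'I_k -> nat) (T P : tensor n) :=
  exists (lambda : C) (r : nat),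
    tensor_rank_is T r /\ tensor_rank_is (tensor_sub T (tensor_scale lambda P)) (r - 1).

Definition W_tensor (k : nat) (n : 'I_k -> nat) (v w : forall i : 'I_k, 'rV[C]_(n i))
  : tensor n :=
  fun x => \sum_(i < k) outer (fun j => if j == i then w j else v j) x.

(* Write p^i = a_i v^i + b_i w^i; then b_i <> 0, and q^i := p^i / b_i = w^i + (a_i / b_i) v^i.
   At each multi-index, F(t) = (q^1 + t v^1) (x) ... (x) (q^k + t v^k) is a polynomial of
   degree k in t with F_0 = P / prod_i b_i, F_k = v^1 (x) ... (x) v^k and
   F_(k-1) = sum_i v^1 (x) ... (x) q^i (x) ... (x) v^k, so T = F_(k-1) - s F_k with
   s = sum_i a_i / b_i.  Choose k - 1 distinct nonzero nodes z_l with sum - s; solving a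
   Vandermonde system gives weights d_l with sum_l d_l F(z_l) = F_0 sum_l d_l + F_(k-1) - s F_k
   (the moment of order k is the sum of the nodes, by Vieta).  Hence T - lambda P is a sum of
   k - 1 rank-one tensors d_l F(z_l), for lambda = - sum_l d_l / prod_i b_i.

   Conversely rk T >= k by substitution.  Let T_S = c v^1 (x) ... (x) v^k + sum_(i in S) T_i,
   T_i having w^i in slot i.  Contracting slot i in S with a functional killing v^i and
   sending w^i to 1 shows that some summand of a decomposition of T_S is not proportional to
   v^i in slot i; contracting instead with a functional that is 1 on v^i and kills that slot,
   and tensoring back with v^i, turns the decomposition into one of T_(S \ i) (with another
   c) with one term fewer.  Finally rk (T - lambda P) >= k - 1 because adding lambda P gives T. *)

From mathcomp Require Import all_boot all_algebra ring complex reals Rstruct.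
From Stdlib Require Import FunctionalExtensionality.
Set Implicit Arguments. Unset Strict Implicit. Unset Printing Implicit Defensive.
Import GRing.Theory Num.Theory.
Local Open Scope ring_scope.

Section Pairing.
Variable R : fieldType.

Definition pairing m (f : 'I_m -> R) (a : 'rV[R]_m) : R := \sum_(y < m) f y * a 0 y.

Lemma pairingZ m (f : 'I_m -> R) c a : pairing f (c *: a) = c * pairing f a.
Proof. by rewrite /pairing mulr_sumr; apply: eq_bigr => y _; rewrite mxE mulrCA. Qed.

Lemma pairing0 m (f : 'I_m -> R) : pairing f 0 = 0.
Proof. by rewrite -(scale0r 0) pairingZ mul0r. Qed.

Lemma pairing_shift m (f : 'I_m -> R) (al be : R) (y0 : 'I_m) a :
  pairing (fun y => al * f y + be * (y == y0)%:R) a = al * pairing f a + be * a 0 y0.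
Proof.
rewrite /pairing; under eq_bigr do rewrite mulrDl.
rewrite big_split /= !mulr_sumr; congr (_ + _).
  by apply: eq_bigr => y _; rewrite mulrA.
rewrite (bigD1 y0) //= eqxx mulr1 big1 ?addr0 // => y /negbTE->.
by rewrite mulr0 mul0r.
Qed.

Lemma row_free_dual m (a b : 'rV[R]_m) : row_free (col_mx a b) ->
  exists f g : 'I_m -> R,
    [/\ pairing f a = 1, pairing f b = 0, pairing g a = 0 & pairing g b = 1].
Proof.
case/row_freeP=> B hB; exists (fun y => B y 0), (fun y => B y 1).
have E (i j : 'I_(1 + 1)) : \sum_y col_mx a b i y * B y j = (1%:M : 'M_(1 + 1)) i j.
  by rewrite -hB mxE.
have Ea j : pairing (fun y => B y j) a = (1%:M : 'M_(1 + 1)) (lshift 1 0) j.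
  by rewrite -E; apply: eq_bigr => y _; rewrite col_mxEu mulrC.
have Eb j : pairing (fun y => B y j) b = (1%:M : 'M_(1 + 1)) (rshift 1 0) j.
  by rewrite -E; apply: eq_bigr => y _; rewrite col_mxEd mulrC.
by rewrite !Ea !Eb !mxE.
Qed.

Lemma pairing_separate m (f : 'I_m -> R) (a u : 'rV[R]_m) :
  pairing f a = 1 -> u != pairing f u *: a -> exists g, pairing g a = 1 /\ pairing g u = 0.
Proof.
move=> fa1 hu; set t := pairing f u in hu.
have [y0 hy0] : exists y0, u 0 y0 - t * a 0 y0 != 0.
  apply/existsP; apply: contraNT hu => /existsPn h0; apply/eqP/rowP => y.
  by have := h0 y; rewrite negbK subr_eq0 mxE => /eqP.
set d := u 0 y0 - t * a 0 y0 in hy0.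
exists (fun y => (1 + t / d * a 0 y0) * f y + (- t / d) * (y == y0)%:R).
rewrite !pairing_shift fa1 -/t; split; first by rewrite mulr1 !mulNr addrK.
have -> : (1 + t / d * a 0 y0) * t + - t / d * u 0 y0 = t - t / d * d.
  by rewrite /d; ring.
by rewrite divfK ?subrr.
Qed.
End Pairing.

Section LinearFactors.
Variables (R : comNzRingType) (I : eqType) (Q V : I -> R).

Definition lin_prod (r : seq I) : {poly R} := \prod_(i <- r) ((Q i)%:P + V i *: 'X).

Lemma lin_prod_cons i r : lin_prod (i :: r) = ((Q i)%:P + V i *: 'X) * lin_prod r.
Proof. exact: big_cons. Qed.

Lemma coef_lin_factorM (q c : R) (G : {poly R}) j :
  ((q%:P + c *: 'X) * G)`_j = q * G`_j + c * (if j is j'.+1 then G`_j' else 0).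
Proof. by rewrite mulrDl coefD coefCM -scalerAl coefZ coefXM; case: j. Qed.

Lemma horner_lin_prod r t : (lin_prod r).[t] = \prod_(i <- r) (Q i + t * V i).
Proof.
rewrite horner_prod; apply: eq_bigr => i _.
by rewrite hornerD hornerC hornerZ hornerX mulrC.
Qed.

Lemma coef0_lin_prod r : (lin_prod r)`_0 = \prod_(i <- r) Q i.
Proof.
rewrite coef0_prod; apply: eq_bigr => i _.
by rewrite coefD coefC coefZ coefX mulr0 addr0.
Qed.

Lemma coef_lin_prod_gt r j : (size r < j)%N -> (lin_prod r)`_j = 0.
Proof.
elim: r j => [|i r IH] [|j] //= ltrj; first by rewrite /lin_prod big_nil coefC.
by rewrite lin_prod_cons coef_lin_factorM !IH ?mulr0 ?addr0 // ltnW.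
Qed.

Lemma size_lin_prod r : (size (lin_prod r) <= (size r).+1)%N.
Proof. by apply/leq_sizeP => j; apply: coef_lin_prod_gt. Qed.

Lemma coef_size_lin_prod r : (lin_prod r)`_(size r) = \prod_(i <- r) V i.
Proof.
elim: r => [|i r IH]; first by rewrite /lin_prod !big_nil coefC.
by rewrite lin_prod_cons coef_lin_factorM /= coef_lin_prod_gt // mulr0 add0r IH big_cons.
Qed.

Lemma coef_pred_lin_prod r : uniq r -> (0 < size r)%N ->
  (lin_prod r)`_(size r).-1 = \sum_(i <- r) Q i * \prod_(j <- r | j != i) V j.
Proof.
elim: r => [//|i r IH] /= /andP[ri uniq_r] _.
rewrite lin_prod_cons coef_lin_factorM big_cons [X in _ = Q i * X + _]big_cons eqxx /=.
have -> : \prod_(j <- r | j != i) V j = \prod_(j <- r) V j.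
  rewrite big_seq_cond [RHS]big_seq; apply: eq_bigl => j.
  by case rj: (j \in r) => //=; apply: contraNneq ri => <-.
case: r IH ri uniq_r => [|i' r] IH ri uniq_r.
  by rewrite /lin_prod !big_nil coefC mulr0 addr0.
rewrite /= coef_size_lin_prod; have /= -> := IH uniq_r isT.
rewrite mulr_sumr; congr (_ + _).
apply: eq_big_seq => j rj; rewrite [in RHS]big_cons.
have -> : i != j by apply: contraNneq ri => ->.
by rewrite mulrCA.
Qed.
End LinearFactors.

Lemma neq_norm_add1_mulrn (R : numDomainType) (s : R) c :
  (0 < c)%N -> s != (`|s| + 1) *+ c.
Proof.
case: c => // c _; apply/eqP => /(congr1 Num.norm).
rewrite normrMn (@ger0_norm _ (`|s| + 1)) ?addr_ge0 // => def_s.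
have : `|s| + 1 <= `|s| by rewrite {2}def_s mulrS lerDl mulrn_wge0 ?addr_ge0.
by rewrite gerDl ler10.
Qed.

Lemma distinct_nonzero_summands (R : numDomainType) N (s : R) :
  exists be : 'I_N.+2 -> R,
    [/\ forall l, be l != 0, injective be & \sum_l be l = s].
Proof.
pose M : R := `|s| + 1.
have s_neq c : (0 < c)%N -> s != M *+ c by exact: neq_norm_add1_mulrn.
have M_neq0 : M != 0 by rewrite lt0r_neq0 // ltr_pwDr.
pose K := (\sum_(l < N.+1) l.+1)%N.
have K_gt0 : (0 < K)%N by rewrite /K big_ord_recl addSn.
pose be (l : 'I_N.+2) := if (l < N.+1)%N then M *+ l.+1 else s - M *+ K.
have last_neq l : s - M *+ K != M *+ l.+1 by rewrite subr_eq -mulrnDr s_neq.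
exists be; split.
- move=> l; rewrite /be; case: ifP => _; last by rewrite subr_eq0 s_neq.
  by rewrite mulrn_eq0 negb_or M_neq0.
- move=> l l'; rewrite /be; case: ifP => lN; case: ifP => l'N.
  + by move/(mulrIn M_neq0)/succn_inj/val_inj.
  + by move/esym/eqP; rewrite (negbTE (last_neq _)).
  + by move/eqP; rewrite (negbTE (last_neq _)).
  + have top (i : 'I_N.+2) : (i < N.+1)%N = false -> val i = N.+1.
      by move=> iN; apply/eqP; rewrite eqn_leq -ltnS ltn_ord leqNgt iN.
    by move=> _; apply/val_inj; rewrite /= (top _ lN) (top _ l'N).
- rewrite big_ord_recr /= /be ltnn /= (eq_bigr (fun l : 'I_N.+1 => M *+ l.+1)).
    by rewrite -sumrMnr subrKC.
  by move=> l _; rewrite ltn_ord.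
Qed.

Lemma vandermonde_solve (K : fieldType) N (be y : 'I_N.+1 -> K) : injective be ->
  exists e : 'I_N.+1 -> K, forall j : 'I_N.+1, \sum_l e l * be l ^+ j = y j.
Proof.
move=> be_inj; pose V := Vandermonde N.+1 (\row_l be l).
have V_unit : V^T \in unitmx.
  rewrite unitmx_tr unitmxE det_Vandermonde unitfE.
  apply/prodf_neq0 => i _; apply/prodf_neq0 => j ij; rewrite !mxE subr_eq0.
  by apply: contraTneq ij => /be_inj->; rewrite ltnn.
pose e := \row_j y j *m invmx V^T.
exists (fun l => e 0 l) => j.
have := congr1 (fun M : 'rV_N.+1 => M 0 j) (mulmxKV V_unit (\row_j y j)).
by rewrite !mxE => <-; apply: eq_bigr => l _; rewrite !mxE.
Qed.

Lemma power_sum_next (K : idomainType) N (be e : 'I_N.+1 -> K) :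
  (forall j : 'I_N.+1, \sum_l e l * be l ^+ j = (j == ord_max)%:R) ->
  \sum_l e l * be l ^+ N.+1 = \sum_l be l.
Proof.
(* Every node is a root of D, whose coefficient of 'X^N is - \sum_l be l. *)
move=> moments; pose D := \prod_(l <- map be (enum 'I_N.+1)) ('X - l%:P).
have size_D : size D = N.+2 by rewrite size_prod_XsubC size_map size_enum_ord.
have coefN_D : D`_N = - \sum_l be l.
  have := @coefPn_prod_XsubC _ (map be (enum 'I_N.+1)).
  by rewrite size_map size_enum_ord [X in - X]big_map big_enum /=; apply.
have coef_top_D : D`_N.+1 = 1.
  have := monicP (monic_prod_XsubC (map be (enum 'I_N.+1)) xpredT id).
  by rewrite lead_coefE size_D.
have root_D l : be l ^+ N.+1 = - \sum_(i < N.+1) D`_i * be l ^+ i.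
  have : root D (be l) by rewrite /D root_prod_XsubC map_f ?mem_enum.
  rewrite /root horner_coef size_D big_ord_recr /= coef_top_D mul1r addrC.
  by rewrite addr_eq0 => /eqP.
under eq_bigr do rewrite root_D mulrN mulr_sumr.
rewrite sumrN exchange_big /= (eq_bigr (fun i : 'I_N.+1 => D`_i * (i == ord_max)%:R)).
  rewrite big_ord_recr /= eqxx mulr1 big1 ?add0r ?coefN_D ?opprK // => i _.
  by rewrite -val_eqE /= (ltn_eqF (ltn_ord i)) mulr0.
move=> i _; rewrite -moments mulr_sumr; apply: eq_bigr => l _; exact: mulrCA.
Qed.

Lemma interpolation_weights (K : fieldType) N (be : 'I_N.+1 -> K) :
  injective be -> (forall l, be l != 0) ->
  exists d : 'I_N.+1 -> K, forall F : {poly K}, (size F <= N.+3)%N ->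
    \sum_l d l * F.[be l] = F`_0 * \sum_l d l + F`_N.+1 + F`_N.+2 * \sum_l be l.
Proof.
move=> be_inj be_neq0.
have [e moments] := vandermonde_solve (fun j : 'I_N.+1 => (j == ord_max)%:R) be_inj.
exists (fun l => e l / be l) => F size_F.
have shift j : \sum_l e l / be l * be l ^+ j.+1 = \sum_l e l * be l ^+ j.
  by apply: eq_bigr => l _; rewrite exprS mulrA divfK.
under eq_bigr do rewrite (horner_coef_wide _ size_F) mulr_sumr.
rewrite exchange_big /=.
under eq_bigr do rewrite (eq_bigr _ (fun l _ => mulrCA _ _ _)) -mulr_sumr.
rewrite big_ord_recl [X in _ + X]big_ord_recr lift0.
under [\sum_(i < N.+1) F`_ _ * _]eq_bigr => i _ do rewrite lift0 /= shift moments.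
rewrite shift (power_sum_next moments) /= [X in _ + (X + _)]big_ord_recr /=.
rewrite eqxx mulr1 [X in _ + (X + _ + _)]big1 ?add0r.
  by under eq_bigr do rewrite expr0 mulr1; rewrite addrA.
by move=> i _; rewrite -val_eqE /= (ltn_eqF (ltn_ord i)) mulr0.
Qed.

Section MultiIndex.
Variables (k : nat) (n : 'I_k -> nat).
Implicit Types (u : forall i : 'I_k, 'rV[C]_(n i)) (x : multi_index n).

Definition upd x (i0 : 'I_k) (y : 'I_(n i0)) : multi_index n :=
  fun j => match i0 =P j with
           | ReflectT e => ecast j 'I_(n j) e y
           | ReflectF _ => x j
           end.
(* [i0] is inferable from [y], but is kept explicit. *)
Arguments upd x i0 y i : clear implicits.

Lemma upd_same x i0 y : upd x i0 y i0 = y.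
Proof. by rewrite /upd; case: eqP => // e; rewrite eq_axiomK. Qed.

Lemma upd_other x i0 y j : j != i0 -> upd x i0 y j = x j.
Proof. by move=> ji0; rewrite /upd; case: eqP => // e; rewrite e eqxx in ji0. Qed.

Definition outer_skip u (i0 : 'I_k) x : C := \prod_(i < k | i != i0) u i 0 (x i).

Lemma outer_skip_upd u i0 x y : outer_skip u i0 (upd x i0 y) = outer_skip u i0 x.
Proof. by apply: eq_bigr => i /upd_other->. Qed.

Lemma eq_outer_skip u u' i0 x :
  (forall i, i != i0 -> u i = u' i) -> outer_skip u i0 x = outer_skip u' i0 x.
Proof. by move=> eq_u; apply: eq_bigr => i /eq_u->. Qed.

Lemma outer_split u i0 x : outer u x = u i0 0 (x i0) * outer_skip u i0 x.
Proof. by rewrite /outer (bigD1 i0). Qed.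

Lemma outer_replace u (a : forall i : 'I_k, 'rV[C]_(n i)) i0 x :
  outer (fun i => if i == i0 then a i else u i) x = a i0 0 (x i0) * outer_skip u i0 x.
Proof.
rewrite (outer_split _ i0) eqxx; congr (_ * _).
by apply: eq_outer_skip => i /negbTE->.
Qed.

Lemma outer_scale u i0 (c : C) x :
  outer (fun i => if i == i0 then c *: u i else u i) x = c * outer u x.
Proof. by rewrite outer_replace mxE (outer_split u i0) mulrA. Qed.

Lemma contract_outer u i0 (f : 'I_(n i0) -> C) x :
  \sum_y f y * outer u (upd x i0 y) = pairing f (u i0) * outer_skip u i0 x.
Proof.
rewrite /pairing mulr_suml; apply: eq_bigr => y _.
by rewrite (outer_split _ i0) upd_same outer_skip_upd mulrA.
Qed.

Lemma contract_sum_outer (I : Type) (r : seq I) (P : pred I)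
    (u : I -> forall i : 'I_k, 'rV[C]_(n i)) i0 (f : 'I_(n i0) -> C) x :
  \sum_y f y * (\sum_(j <- r | P j) outer (u j) (upd x i0 y)) =
  \sum_(j <- r | P j) pairing f (u j i0) * outer_skip (u j) i0 x.
Proof.
under eq_bigr do rewrite mulr_sumr.
by rewrite exchange_big; apply: eq_bigr => j _; apply: contract_outer.
Qed.
End MultiIndex.
Arguments upd {k n} x i0 y i.

Lemma row_neq0_entry (R : nmodType) m (a : 'rV[R]_m) : a != 0 -> exists y, a 0 y != 0.
Proof.
move=> a_neq0; apply/existsP; apply: contraNT a_neq0 => /existsPn a0.
by apply/eqP/rowP => y; rewrite mxE; apply/eqP/negbNE/a0.
Qed.

Lemma submx_col_mx2 (R : fieldType) m (p a b : 'rV[R]_m) :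
  (p <= col_mx a b)%MS -> exists c d, p = c *: a + d *: b.
Proof.
case/submxP=> D ->; exists (lsubmx D 0 0), (rsubmx D 0 0).
rewrite -[D in LHS]hsubmxK mul_row_col {1}(mx11_scalar (lsubmx D)).
by rewrite {1}(mx11_scalar (rsubmx D)) !mul_scalar_mx.
Qed.

Section WTensor.
Variables (k : nat) (n : 'I_k -> nat) (v w : forall i : 'I_k, 'rV[C]_(n i)).
Implicit Types (S : {set 'I_k}) (c : C) (x : multi_index n).

Definition vw (i j : 'I_k) : 'rV[C]_(n j) := if j == i then w j else v j.

Definition Wpart (S : {set 'I_k}) (c : C) : tensor n :=
  fun x => c * outer v x + \sum_(i in S) outer (vw i) x.

Lemma W_tensorE : W_tensor v w = Wpart [set: 'I_k] 0.
Proof.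
apply: functional_extensionality => x; rewrite /Wpart mul0r add0r.
by apply: eq_bigl => i; rewrite in_setT.
Qed.

Lemma outer_skip_vw i0 x : outer_skip (vw i0) i0 x = outer_skip v i0 x.
Proof. by apply: eq_outer_skip => i /negbTE; rewrite /vw => ->. Qed.

Lemma contract_Wpart S c i0 (f : 'I_(n i0) -> C) x :
  \sum_y f y * Wpart S c (upd x i0 y) =
  c * pairing f (v i0) * outer_skip v i0 x +
  \sum_(i in S) pairing f (vw i i0) * outer_skip (vw i) i0 x.
Proof.
under eq_bigr do rewrite mulrDr mulrCA.
rewrite big_split /= -mulrA -contract_outer mulr_sumr; f_equal.
exact: contract_sum_outer.
Qed.

Lemma Wpart_contract_neq0 S c r (u : 'I_r -> forall i : 'I_k, 'rV[C]_(n i)) i0 g :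
  (forall i, v i != 0) -> i0 \in S -> pairing g (v i0) = 0 -> pairing g (w i0) = 1 ->
  Wpart S c = (fun x => \sum_j outer (u j) x) -> exists j, pairing g (u j i0) != 0.
Proof.
move=> v_neq0 Si0 gv gw decu.
have [x vx_neq0] : exists x : multi_index n, forall i, v i 0 (x i) != 0.
  apply: (@fin_all_exists _ (fun i => 'I_(n i)) (fun i y => v i 0 y != 0)) => i.
  exact: row_neq0_entry.
apply/existsP; apply: contraT => /existsPn gu0.
have lhs0 : \sum_j pairing g (u j i0) * outer_skip (u j) i0 x = 0.
  by apply: big1 => j _; rewrite (eqP (negbNE (gu0 j))) mul0r.
have rhs : c * pairing g (v i0) * outer_skip v i0 x +
    \sum_(i in S) pairing g (vw i i0) * outer_skip (vw i) i0 x = outer_skip v i0 x.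
  have rest0 : \sum_(i in S :\ i0) pairing g (vw i i0) * outer_skip (vw i) i0 x = 0.
    by apply: big1 => i /setD1P[i_neq _]; rewrite /vw eq_sym (negbTE i_neq) gv mul0r.
  rewrite gv mulr0 mul0r add0r (big_setD1 _ Si0) /= rest0 addr0.
  by rewrite /vw eqxx gw mul1r outer_skip_vw.
have skip_neq0 : outer_skip v i0 x != 0.
  by rewrite prodf_seq_neq0; apply/allP => i _; apply/implyP.
have := contract_Wpart S c g x; rewrite decu contract_sum_outer lhs0 rhs => skip0.
by rewrite -skip0 eqxx in skip_neq0.
Qed.

Lemma Wpart_contract_lift S c i0 (f : 'I_(n i0) -> C) x :
  i0 \in S -> pairing f (v i0) = 1 ->
  v i0 0 (x i0) * \sum_y f y * Wpart S c (upd x i0 y) =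
  Wpart (S :\ i0) (c + pairing f (w i0)) x.
Proof.
move=> Si0 fv.
have at_i0 :
    pairing f (vw i0 i0) * outer_skip (vw i0) i0 x = pairing f (w i0) * outer_skip v i0 x.
  by rewrite /vw eqxx outer_skip_vw.
have off_i0 i : i \in S :\ i0 ->
    v i0 0 (x i0) * (pairing f (vw i i0) * outer_skip (vw i) i0 x) = outer (vw i) x.
  case/setD1P=> i_neq _; have vw_i0 : vw i i0 = v i0 by rewrite /vw eq_sym (negbTE i_neq).
  by rewrite (outer_split (vw i) i0) vw_i0 fv mul1r.
rewrite contract_Wpart (big_setD1 _ Si0) /= at_i0 fv mulr1 /Wpart (outer_split v i0).
rewrite !mulrDr mulr_sumr (eq_bigr _ off_i0); ring.
Qed.

Lemma Wpart_peel S c r (u : 'I_r.+1 -> forall i : 'I_k, 'rV[C]_(n i)) i0 j0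
    (f : 'I_(n i0) -> C) :
  i0 \in S -> pairing f (v i0) = 1 -> pairing f (u j0 i0) = 0 ->
  Wpart S c = (fun x => \sum_j outer (u j) x) ->
  sum_of_rank_one (Wpart (S :\ i0) (c + pairing f (w i0))) r.
Proof.
move=> Si0 fv fu0 decu.
exists (fun j i => if i == i0 then pairing f (u (lift j0 j) i0) *: v i else u (lift j0 j) i).
apply: functional_extensionality => x.
rewrite -(Wpart_contract_lift _ _ Si0 fv) decu contract_sum_outer.
rewrite (bigD1_ord j0) //= fu0 mul0r add0r mulr_sumr; apply: eq_bigr => j _.
by rewrite outer_replace mxE mulrCA mulrA.
Qed.

Lemma Wpart_rank_ge S c r : (forall i, row_free (col_mx (v i) (w i))) ->
  sum_of_rank_one (Wpart S c) r -> (#|S| <= r)%N.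
Proof.
move=> vw_free; have dual i := row_free_dual (vw_free i).
have v_neq0 i : v i != 0.
  have [f [_ [fv _ _ _]]] := dual i; apply: contra_eq_neq fv => ->.
  by rewrite pairing0 eq_sym oner_eq0.
elim: r S c => [|r IH] S c [u decu];
  have [->|[i0 Si0]] := set_0Vmem S; rewrite ?cards0 //;
  have [f [g [fv _ gv gw]]] := dual i0;
  have [j0 gu] := Wpart_contract_neq0 v_neq0 Si0 gv gw decu; first by case: j0 gu.
have u_indep : u j0 i0 != pairing f (u j0 i0) *: v i0.
  by apply: contra gu => /eqP->; rewrite pairingZ gv mulr0.
have [h [hv hu]] := pairing_separate fv u_indep.
by rewrite (cardsD1 i0) Si0 add1n ltnS; apply: IH (Wpart_peel Si0 hv hu decu).
Qed.

Lemma W_tensor_rank : (forall i, row_free (col_mx (v i) (w i))) ->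
  tensor_rank_is (W_tensor v w) k.
Proof.
move=> vw_free; split; first by exists vw.
by move=> r; rewrite W_tensorE => /(Wpart_rank_ge vw_free); rewrite cardsT card_ord.
Qed.
End WTensor.

Lemma sum_of_rank_one_addr k (n : 'I_k -> nat) (T T' : tensor n) r
    (t : forall i : 'I_k, 'rV[C]_(n i)) :
  sum_of_rank_one T' r -> (forall x, T x = T' x + outer t x) -> sum_of_rank_one T r.+1.
Proof.
case=> u -> defT; exists (fun j => if unlift ord_max j is Some j' then u j' else t).
apply: functional_extensionality => x.
rewrite defT (bigD1_ord ord_max) //= unlift_none addrC; congr (_ + _).
by apply: eq_bigr => j _; rewrite liftK.
Qed.

Lemma tensor_rank_sub_outer k (n : 'I_k -> nat) (T : tensor n)
    (p : forall i : 'I_k, 'rV[C]_(n i)) lam r :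
  (0 < k)%N -> tensor_rank_is T r ->
  sum_of_rank_one (tensor_sub T (tensor_scale lam (outer p))) (r - 1) ->
  tensor_rank_is (tensor_sub T (tensor_scale lam (outer p))) (r - 1).
Proof.
move=> k_gt0 [_ T_min] decTP; split=> // r' decTP'; rewrite leq_subLR add1n.
apply/T_min/(sum_of_rank_one_addr
  (t := fun i => if i == Ordinal k_gt0 then lam *: p i else p i) decTP') => x.
by rewrite outer_scale /tensor_sub /tensor_scale subrK.
Qed.

Lemma size_index_enum_ord k : size (index_enum 'I_k) = k.
Proof. by rewrite [index_enum _]unlock -enumT size_enum_ord. Qed.

Section UpperBound.
Variables (k : nat) (n : 'I_k -> nat) (v w p : forall i : 'I_k, 'rV[C]_(n i)).
Variables (a b : 'I_k -> C).
Hypothesis b_neq0 : forall i, b i != 0.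
Hypothesis def_p : forall i, p i = a i *: v i + b i *: w i.

Definition q i : 'rV[C]_(n i) := (a i / b i) *: v i + w i.

Definition pencil_poly (x : multi_index n) : {poly C} :=
  lin_prod (fun i => q i 0 (x i)) (fun i => v i 0 (x i)) (index_enum 'I_k).

Lemma size_pencil_poly x : (size (pencil_poly x) <= k.+1)%N.
Proof.
have := size_lin_prod (fun i => q i 0 (x i)) (fun i => v i 0 (x i)) (index_enum 'I_k).
by rewrite size_index_enum_ord.
Qed.

Lemma outer_p_pencil_poly x : outer p x = \prod_i b i * (pencil_poly x)`_0.
Proof.
rewrite coef0_lin_prod -big_split; apply: eq_bigr => i _.
by rewrite def_p !mxE /=; field.
Qed.

Lemma horner_pencil_poly (be : C) x : outer (fun i => be *: v i + q i) x = (pencil_poly x).[be].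
Proof. by rewrite horner_lin_prod; apply: eq_bigr => i _; rewrite !mxE addrC. Qed.

Lemma W_tensor_pencil_poly x : (0 < k)%N ->
  W_tensor v w x = (pencil_poly x)`_k.-1 - (\sum_i a i / b i) * (pencil_poly x)`_k.
Proof.
move=> k_gt0; rewrite /pencil_poly.
have := coef_pred_lin_prod (fun i => q i 0 (x i)) (fun i => v i 0 (x i)) (index_enum_uniq 'I_k).
have := coef_size_lin_prod (fun i => q i 0 (x i)) (fun i => v i 0 (x i)) (index_enum 'I_k).
rewrite size_index_enum_ord => -> /(_ k_gt0) ->.
rewrite mulr_suml -sumrB; apply: eq_bigr => i _.
rewrite (outer_split _ i) eqxx [\prod_j _](bigD1 i) //= mulrA -mulrBl; congr (_ * _).
  by rewrite /q !mxE; field.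
by apply: eq_outer_skip => j /negbTE->.
Qed.
End UpperBound.

Lemma W_tensor_sub_outer_decomposition k (n : 'I_k -> nat)
    (v w p : forall i : 'I_k, 'rV[C]_(n i)) (a b : 'I_k -> C) :
  (3 <= k)%N -> (forall i, b i != 0) -> (forall i, p i = a i *: v i + b i *: w i) ->
  exists lam, sum_of_rank_one (tensor_sub (W_tensor v w) (tensor_scale lam (outer p))) (k - 1).
Proof.
case: k n v w p a b => [|[|[|m]]] // n v w p a b _ b_neq0 def_p.
suff [lam decTP] : exists lam,
    sum_of_rank_one (tensor_sub (W_tensor v w) (tensor_scale lam (outer p))) m.+2.
  by exists lam.
pose s := \sum_i a i / b i.
have [be [be_neq0 be_inj sum_be]] := distinct_nonzero_summands m (- s).
have [d interp] := interpolation_weights be_inj be_neq0.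
rewrite sum_be in interp.
exists (- (\sum_l d l) / \prod_i b i).
pose node l i := be l *: v i + q v w a b i.
exists (fun l i => if i == ord0 then d l *: node l i else node l i).
apply: functional_extensionality => x.
under [RHS]eq_bigr do rewrite outer_scale horner_pencil_poly.
rewrite interp ?size_pencil_poly //.
rewrite /tensor_sub /tensor_scale (W_tensor_pencil_poly v w a b_neq0) //.
rewrite (outer_p_pencil_poly b_neq0 def_p).
rewrite /s /=; field.
by apply/prodf_neq0 => i _; apply: b_neq0.
Qed.

Theorem proposition4p6 (k : nat) (n : 'I_k -> nat)
    (v w p : forall i : 'I_k, 'rV[C]_(n i)) :
  (3 <= k)%N ->
  (forall i, row_free (col_mx (v i) (w i))) ->
  (forall i, (p i <= col_mx (v i) (w i))%MS) ->
  (forall i, p i != 0) ->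
  (forall i, ~ exists c : C, p i = c *: v i) ->
  in_decomposition_locus (W_tensor v w) (outer p).
Proof.
move=> k_ge3 vw_free p_span _ p_notv.
have [ab def_p] : exists ab : 'I_k -> C * C, forall i, p i = (ab i).1 *: v i + (ab i).2 *: w i.
  apply: (@fin_all_exists _ (fun=> (C * C)%type)
    (fun i ab => p i = ab.1 *: v i + ab.2 *: w i)) => i.
  have [c [d ->]] := submx_col_mx2 (p_span i).
  by exists (c, d).
have b_neq0 i : (ab i).2 != 0.
  apply: contra_not_neq (p_notv i) => b0.
  by exists (ab i).1; rewrite def_p b0 scale0r addr0.
have [lam decTP] := W_tensor_sub_outer_decomposition k_ge3 b_neq0 def_p.
have rkW := W_tensor_rank vw_free.
exists lam, k; split=> //.
exact: tensor_rank_sub_outer (ltnW (ltnW k_ge3)) rkW decTP.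
Qed.
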